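(* Let $\mathcal{H}_n$ be an $n$-dimensional Hilbert space, let $F=\{f_i\}_{i=1}^N$ be a frame for $\mathcal{H}_n$, and let $G=\{g_i\}_{i=1}^N$ be a $1$-uniform dual of $F$. Then \[ \sum_{i\neq j} |\langle f_i, g_j\rangle|^2 \;\geq\; n-\frac{n^2}{N}. \]
   Context: A finite sequence $F=\{f_i\}_{i=1}^N$ in $\mathcal{H}_n$ is a frame if there are constants $0<A'\le B'$ with $A'\|f\|^2\le\sum_{i=1}^N|\langle f,f_i\rangle|^2\le B'\|f\|^2$ for all $f\in\mathcal{H}_n$. A sequence $G=\{g_i\}_{i=1}^N$ in $\mathcal{H}_n$ is a dual frame (dual) of $F$ if $f=\sum_{i=1}^N\langle f,f_i\rangle g_i$ for all $f\in\mathcal{H}_n$. A dual $G$ of $F$ is called $1$-uniform if there is a constant $c\in\mathbb{C}$ with $\langle f_i,g_i\rangle=c$ for all $1\le i\le N$. *)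

(* H_n is modelled as C^n = 'rV[C]_n with the standard
   inner product, over an arbitrary numClosedFieldType C (e.g. the complex
   numbers). *)
From HB Require Import structures.
From mathcomp Require Import all_boot all_order all_algebra.
Set Implicit Arguments. Unset Strict Implicit. Unset Printing Implicit Defensive.
Import Order.TTheory GRing.Theory Num.Theory.
Local Open Scope ring_scope.

Definition inprod (C : numClosedFieldType) (n : nat) (u v : 'rV[C]_n) : C :=
  \sum_(k < n) u 0 k * (v 0 k)^*.

Definition normsq (C : numClosedFieldType) (n : nat) (u : 'rV[C]_n) : C :=
  inprod u u.

Definition is_frame (C : numClosedFieldType) (n N : nat) (F : 'I_N -> 'rV[C]_n) : Prop :=
  exists A B : C, [/\ 0 < A, A <= B &
    forall f : 'rV[C]_n,
      A * normsq f <= \sum_(i < N) `|inprod f (F i)| ^+ 2 /\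
      \sum_(i < N) `|inprod f (F i)| ^+ 2 <= B * normsq f].

Definition is_dual (C : numClosedFieldType) (n N : nat) (F G : 'I_N -> 'rV[C]_n) : Prop :=
  forall f : 'rV[C]_n, f = \sum_(i < N) inprod f (F i) *: G i.

Definition is_1_uniform_dual (C : numClosedFieldType) (n N : nat) (F G : 'I_N -> 'rV[C]_n) : Prop :=
  is_dual F G /\ exists c : C, forall i : 'I_N, inprod (F i) (G i) = c.

(** Write [P i j = <f_i, g_j>].  The dual identity [f = sum_j <f, f_j> g_j] makes
    the operator [sum_j g_j f_j^*] the identity of [C^n], so its trace gives
    [sum_i P i i = n]; expanding [<g_i, f_i>] once more with the dual identity
    gives [sum_(i,j) P j i * P i j = n] as well ([P] is idempotent).  Since
    [|P j i| |P i j| <= (|P j i|^2 + |P i j|^2) / 2], the squared Frobenius norm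
    of [P] is at least [n].  For a 1-uniform dual the diagonal of [P] is
    constant, hence equal to [n / N], and it carries only [N (n / N)^2] of that
    norm. *)

From HB Require Import structures.
From mathcomp Require Import all_boot all_order all_algebra.
Set Implicit Arguments. Unset Strict Implicit. Unset Printing Implicit Defensive.
Import Order.TTheory GRing.Theory Num.Theory.
Local Open Scope ring_scope.

Section InnerProduct.
Variables (C : numClosedFieldType) (n : nat).

Lemma inprodC (u v : 'rV[C]_n) : inprod v u = (inprod u v)^*.
Proof.
rewrite /inprod rmorph_sum; apply: eq_bigr => k _.
by rewrite rmorphM /= conjCK mulrC.
Qed.

Lemma inprod_sumZl (I : finType) (a : I -> C) (u : I -> 'rV[C]_n) (v : 'rV[C]_n) :
  inprod (\sum_j a j *: u j) v = \sum_j a j * inprod (u j) v.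
Proof.
rewrite /inprod; under eq_bigr => k _ do rewrite summxE mulr_suml.
rewrite exchange_big; apply: eq_bigr => j _.
by rewrite mulr_sumr; apply: eq_bigr => k _; rewrite mxE mulrA.
Qed.

Lemma inprod_delta_mxl (k : 'I_n) (u : 'rV[C]_n) :
  inprod (delta_mx 0 k) u = (u 0 k)^*.
Proof.
rewrite /inprod (bigD1 k) //= mxE !eqxx mul1r big1 ?addr0 // => j neq_jk.
by rewrite mxE (negbTE neq_jk) andbF mul0r.
Qed.

End InnerProduct.

Section DualFrame.
Variables (C : numClosedFieldType) (n N : nat) (F G : 'I_N -> 'rV[C]_n).
Hypothesis FG_dual : is_dual F G.

Lemma dual_inprod_expand (u v : 'rV[C]_n) :
  inprod u v = \sum_j inprod u (F j) * inprod (G j) v.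
Proof. by rewrite {1}(FG_dual u) inprod_sumZl. Qed.

Lemma dual_trace : \sum_i inprod (F i) (G i) = n%:R.
Proof.
have coord_delta k : 1 = \sum_i G i 0 k * (F i 0 k)^*.
  have /(congr1 (fun u : 'rV[C]_n => u 0 k)) := FG_dual (delta_mx 0 k).
  rewrite mxE !eqxx summxE => e; apply: (etrans e).
  by apply: eq_bigr => i _; rewrite mxE inprod_delta_mxl mulrC.
have trace_GF : \sum_i inprod (G i) (F i) = n%:R.
  rewrite -[n in n%:R]card_ord -sumr_const /inprod exchange_big.
  by apply: eq_bigr => k _; rewrite -coord_delta.
under eq_bigr => i _ do rewrite inprodC.
by rewrite -rmorph_sum trace_GF rmorph_nat.
Qed.

Lemma dual_trace_sqr :
  \sum_i \sum_j inprod (F j) (G i) * inprod (F i) (G j) = n%:R.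
Proof.
rewrite -dual_trace; apply: eq_bigr => i _.
rewrite inprodC dual_inprod_expand rmorph_sum; apply: eq_bigr => j _.
by rewrite rmorphM /= -!inprodC.
Qed.

End DualFrame.

Lemma norm_trace_sqr_le (C : numDomainType) (I : finType) (a : I -> I -> C) :
  `|\sum_i \sum_j a j i * a i j| <= \sum_i \sum_j `|a i j| ^+ 2.
Proof.
have S2 : (\sum_i \sum_j `|a i j| ^+ 2) *+ 2
    = \sum_i \sum_j (`|a j i| ^+ 2 + `|a i j| ^+ 2).
  rewrite mulr2n {1}exchange_big -big_split.
  by apply: eq_bigr => i _; rewrite -big_split.
apply: (le_trans (y := \sum_i \sum_j `|a j i| * `|a i j|)).
  apply: le_trans (ler_norm_sum _ _ _) _; apply: ler_sum => i _.
  apply: le_trans (ler_norm_sum _ _ _) _; apply: ler_sum => j _.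
  by rewrite normrM.
rewrite -(ler_pMn2r (_ : (0 < 2)%N)) // S2 -sumrMnl ler_sum // => i _.
by rewrite -sumrMnl ler_sum // => j _; rewrite real_leif_mean_square_scaled ?normr_real.
Qed.

Lemma sumr_offdiag (V : zmodType) (I : finType) (a : I -> I -> V) :
  \sum_i \sum_(j | i != j) a i j = \sum_i \sum_j a i j - \sum_i a i i.
Proof.
rewrite -sumrB; apply: eq_bigr => i _.
by rewrite [in RHS](bigD1 i) //= addrAC subrr add0r; apply: eq_bigl => j; rewrite eq_sym.
Qed.

Lemma sum_offdiag_sqr_ge (C : numFieldType) (I : finType) (a : I -> I -> C)
    (c : C) (m : nat) :
  (forall i, a i i = c) -> \sum_i a i i = m%:R ->
  m%:R <= \sum_i \sum_j `|a i j| ^+ 2 ->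
  m%:R - m%:R ^+ 2 / #|I|%:R <= \sum_i \sum_(j | i != j) `|a i j| ^+ 2.
Proof.
move=> diag_a trace_a frob_a.
have {}trace_a : #|I|%:R * c = m%:R.
  by rewrite -trace_a (eq_bigr (fun=> c)) // sumr_const mulr_natl.
rewrite sumr_offdiag.
under [\sum_i `|a i i| ^+ 2]eq_bigr => i _ do rewrite diag_a.
rewrite sumr_const -[`|c| ^+ 2 *+ _]mulr_natl.
have [card0 | card_neq0] := eqVneq #|I| 0%N.
  by rewrite card0 mul0r invr0 mulr0 !subr0.
have cardR_neq0 : #|I|%:R != 0 :> C by rewrite pnatr_eq0.
have -> : c = m%:R / #|I|%:R by rewrite -trace_a mulrC mulKf.
rewrite lerB // ger0_norm ?divr_ge0 // expr_div_n.
by rewrite [#|I|%:R ^+ 2]expr2 invfM mulrCA mulVKf.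
Qed.

Theorem proposition2p6 (C : numClosedFieldType) (n N : nat)
  (F G : 'I_N -> 'rV[C]_n) :
  is_frame F -> is_1_uniform_dual F G ->
  \sum_(i < N) \sum_(j < N | i != j) `|inprod (F i) (G j)| ^+ 2
    >= n%:R - (n%:R) ^+ 2 / N%:R.
Proof.
move=> _ [FG_dual [c uniform]].
rewrite -[N in _ / N%:R]card_ord.
apply: (sum_offdiag_sqr_ge (a := fun i j => inprod (F i) (G j)) uniform).
  exact: dual_trace.
by rewrite -normr_nat -(dual_trace_sqr FG_dual) norm_trace_sqr_le.
Qed.
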